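(* Let $(X,\|\cdot\|)$ be a strictly convex two-dimensional real normed space with closed unit ball $B_X$ and unit sphere $S_X$. For every $z\in\operatorname{int}(B_X)\setminus\{0\}$ there exists exactly one unordered pair $\{x,x'\}\subset S_X$ such that $z=\tfrac12(x+x')$.
   Context: A norm is strictly convex if the unit sphere contains no nondegenerate line segment. *)

(* A two-dimensional real normed space is modelled as
   R^2 = 'rV[R]_2 (R : realType) equipped with an arbitrary norm N. *)
From HB Require Import structures.
From mathcomp Require Import all_boot all_order all_algebra.
From mathcomp Require Import reals.
Set Implicit Arguments. Unset Strict Implicit. Unset Printing Implicit Defensive.
Import Order.TTheory GRing.Theory Num.Theory.
Local Open Scope ring_scope.

Definition is_norm (R : realType) (N : 'rV[R]_2 -> R) : Prop :=
  [/\ (forall x, N x = 0 -> x = 0),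
      (forall (a : R) x, N (a *: x) = `|a| * N x) &
      (forall x y, N (x + y) <= N x + N y)].

Definition strictly_convex (R : realType) (N : 'rV[R]_2 -> R) : Prop :=
  forall x y, N x = 1 -> N y = 1 -> x != y ->
    ~ (forall t : R, 0 <= t <= 1 -> N ((1 - t) *: x + t *: y) = 1).

Definition in_int_ball (R : realType) (N : 'rV[R]_2 -> R) (z : 'rV[R]_2) : Prop :=
  exists2 e : R, 0 < e & forall y, N (y - z) < e -> N y <= 1.

From HB Require Import structures.
From mathcomp Require Import all_boot all_order all_algebra.
From mathcomp Require Import reals topology normedtype.
From mathcomp Require Import ring lra.
Import Order.TTheory GRing.Theory Num.Theory.
Import numFieldNormedType.Exports.
Set Implicit Arguments.
Unset Strict Implicit.
Unset Printing Implicit Defensive.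
Local Open Scope ring_scope.

(* Existence: as u moves on the unit sphere from z / N z to -z / N z, the number
   N (2 z - u) passes from |2 N z - 1| < 1 to 2 N z + 1 > 1, so by the intermediate
   value theorem x = u and x' = 2 z - u are both unit vectors for some u.
   Uniqueness: if x + x' = y + y' with y <> x, each p among x, y', -x', -y is the
   upper end of a chord [p - d, p] of the unit sphere with direction d = x - y.
   Lines parallel to d are indexed by the cross product of their points with d.
   By strict convexity each such line carries at most one chord of direction d,
   and these chords lie on at most two lines: a chord between two others would have
   on its line, by strict convexity, a parallel translate inside the open ball, which
   plain convexity forbids. Comparing the lines of x, y', -x' and -y forces y' = x,
   or x' = -x, which is excluded by z <> 0. *)

Section Plane.
Variable R : realType.
Implicit Types (u v d : 'rV[R]_2) (a b k : R).

Lemma row2P u v : u 0 0 = v 0 0 -> u 0 1 = v 0 1 -> u = v.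
Proof.
move=> h0 h1; apply/rowP => -[[|[|i]] lti] //.
- by rewrite (_ : Ordinal lti = 0) //; apply: val_inj.
- by rewrite (_ : Ordinal lti = 1) //; apply: val_inj.
Qed.

Definition cross u v := u 0 0 * v 0 1 - u 0 1 * v 0 0.

Lemma cross_eq0_colinear u d : d != 0 -> cross u d = 0 -> exists k, u = k *: d.
Proof.
rewrite /cross => dn0 h.
have [d0|d0] := eqVneq (d 0 0) 0.
  have d1 : d 0 1 != 0.
    by apply: contraNneq dn0 => d1; apply/eqP/row2P; rewrite !mxE.
  exists (u 0 1 / d 0 1); apply: row2P; rewrite !mxE ?divfK //.
  by rewrite mulrAC (_ : u 0 1 * d 0 0 = u 0 0 * d 0 1) ?mulfK //; lra.
exists (u 0 0 / d 0 0); apply: row2P; rewrite !mxE ?divfK //.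
by rewrite mulrAC (_ : u 0 0 * d 0 1 = u 0 1 * d 0 0) ?mulfK //; lra.
Qed.

Definition perp u : 'rV[R]_2 := \row_(i < 2) (if val i == 0%N then - u 0 1 else u 0 0).

Lemma perp_free u a b : u != 0 -> a *: u + b *: perp u = 0 -> a = 0 /\ b = 0.
Proof.
move=> un0 /rowP uE; have := uE 0; have := uE 1; rewrite !mxE /= => E1 E0.
have S0 : u 0 0 ^+ 2 + u 0 1 ^+ 2 != 0.
  rewrite paddr_eq0 ?sqr_ge0 // !sqrf_eq0.
  by apply: contra un0 => /andP[/eqP h0 /eqP h1]; apply/eqP/row2P; rewrite !mxE.
split; apply/(mulIf S0); rewrite mul0r.
- have -> : a * (u 0 0 ^+ 2 + u 0 1 ^+ 2)
      = u 0 0 * (a * u 0 0 + b * - u 0 1) + u 0 1 * (a * u 0 1 + b * u 0 0) by ring.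
  by rewrite E0 E1 !mulr0 addr0.
- have -> : b * (u 0 0 ^+ 2 + u 0 1 ^+ 2)
      = u 0 0 * (a * u 0 1 + b * u 0 0) - u 0 1 * (a * u 0 0 + b * - u 0 1) by ring.
  by rewrite E0 E1 !mulr0 subr0.
Qed.

End Plane.

Ltac row2_field := apply: row2P; rewrite !mxE; field; try lra.

Section Norm.
Variables (R : realType) (N : 'rV[R]_2 -> R).
Hypothesis normN : is_norm N.
Implicit Types (u v p q d z : 'rV[R]_2) (a b k t : R).

Lemma NZ a u : N (a *: u) = `|a| * N u.
Proof. by case: normN. Qed.

Lemma N_triangle u v : N (u + v) <= N u + N v.
Proof. by case: normN. Qed.

Lemma N0 : N 0 = 0.
Proof. by rewrite -(scale0r (0 : 'rV[R]_2)) NZ normr0 mul0r. Qed.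

Lemma NN u : N (- u) = N u.
Proof. by rewrite -scaleN1r NZ normrN normr1 mul1r. Qed.

Lemma N_ge0 u : 0 <= N u.
Proof. by have := N_triangle u (- u); rewrite subrr N0 NN; lra. Qed.

Lemma N_gt0 u : u != 0 -> 0 < N u.
Proof.
case: normN => N_eq0 _ _ un0; rewrite lt_def N_ge0 andbT.
by apply: contra_neq un0; apply: N_eq0.
Qed.

Lemma N_dist_le u v : `|N u - N v| <= N (u - v).
Proof.
rewrite ler_norml; have := N_triangle (v - u) u; have := N_triangle (u - v) v.
by rewrite !subrK -[v - u]opprB NN; lra.
Qed.

Lemma N_convex u v a b : 0 <= a -> 0 <= b ->
  N (a *: u + b *: v) <= a * N u + b * N v.
Proof.
by move=> a0 b0; apply: le_trans (N_triangle _ _) _; rewrite !NZ !ger0_norm.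
Qed.

Lemma N_comb_le1 a b u v : N u <= 1 -> N v <= 1 -> 0 <= a -> 0 <= b -> a + b = 1 :> R ->
  N (a *: u + b *: v) <= 1.
Proof.
move=> u1 v1 a0 b0 ab; apply: le_trans (N_convex u v a0 b0) _; nra.
Qed.

Lemma N_comb_lt1 a b u v : N u < 1 -> N v <= 1 -> 0 < a -> 0 <= b -> a + b = 1 :> R ->
  N (a *: u + b *: v) < 1.
Proof.
move=> u1 v1 a0 b0 ab; apply: le_lt_trans (N_convex u v (ltW a0) b0) _.
by have := N_ge0 u; have := N_ge0 v; nra.
Qed.

Lemma N_comb_ge1 a b u v : N v <= 1 -> 0 < a -> 0 <= b -> a + b = 1 :> R ->
  1 <= N (a *: u + b *: v) -> 1 <= N u.
Proof.
move=> v1 a0 b0 ab h; have := N_convex u v (ltW a0) b0.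
by have := N_ge0 u; have := N_ge0 v; nra.
Qed.

Definition sphere_chord p d := N p = 1 /\ N (p - d) = 1.

Lemma sphere_chord_translate_lt1 p d k : sphere_chord p d ->
  N (p + k *: d) < 1 -> N (p + k *: d - d) < 1 -> False.
Proof.
case=> p1 pd1 P1 Q1.
have [k1|k1] := lerP 1 k.
  have E : p = k^-1 *: (p + k *: d - d) + (1 - k^-1) *: (p - d) by row2_field.
  suff : N p < 1 by rewrite p1 ltxx.
  by rewrite E N_comb_lt1 ?pd1 ?invr_gt0 ?subr_ge0 ?invf_le1 //; lra.
have [k0|k0] := lerP 0 k.
  have E : p = (1 - k) *: (p + k *: d) + k *: (p + k *: d - d) by row2_field.
  suff : N p < 1 by rewrite p1 ltxx.
  by rewrite E N_comb_lt1 //; lra.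
have [km|km] := lerP (-1) k.
  have E : p - d = - k *: (p + k *: d) + (1 + k) *: (p + k *: d - d) by row2_field.
  suff : N (p - d) < 1 by rewrite pd1 ltxx.
  by rewrite E N_comb_lt1 //; lra.
have E : p - d = - k^-1 *: (p + k *: d) + (1 + k^-1) *: p by row2_field.
suff : N (p - d) < 1 by rewrite pd1 ltxx.
have kk : k^-1 * k = 1 by rewrite mulVf //; apply/eqP; lra.
have ki : k^-1 < 0 by rewrite invr_lt0; lra.
by rewrite E N_comb_lt1 ?p1 //; nra.
Qed.

Lemma continuous_N_comb (a b : R -> R) u v : continuous a -> continuous b ->
  continuous (fun s => N (a s *: u + b s *: v)).
Proof.
move=> ca cb t; apply/cvgrPdist_lt => e e0.
pose C := N u + N v + 1.
have C0 : 0 < C by have := N_ge0 u; have := N_ge0 v; rewrite /C; lra.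
have eC : 0 < e / C by apply: divr_gt0.
move/cvgrPdist_lt: (ca t) => /(_ _ eC) near_a.
move/cvgrPdist_lt: (cb t) => /(_ _ eC) near_b.
near=> s.
have as_t : `|a t - a s| < e / C by near: s.
have bs_t : `|b t - b s| < e / C by near: s.
apply: le_lt_trans (N_dist_le _ _) _.
have -> : a t *: u + b t *: v - (a s *: u + b s *: v)
    = (a t - a s) *: u + (b t - b s) *: v by rewrite !scalerBl opprD addrACA.
apply: le_lt_trans (N_triangle _ _) _; rewrite !NZ.
have : `|a t - a s| * N u + `|b t - b s| * N v <= e / C * (N u + N v).
  by rewrite mulrDr; apply: lerD; apply: ler_wpM2r; rewrite ?N_ge0 ?ltW.
have : e / C * (N u + N v) < e.
  by rewrite mulrAC ltr_pdivrMr // ltr_pM2l // /C; lra.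
lra.
Unshelve. all: by end_near.
Qed.

Lemma in_int_ball_N_lt1 z : in_int_ball N z -> N z < 1.
Proof.
case=> e e0 ball_z; have [->|zn0] := eqVneq z 0; first by rewrite N0.
have z0 := N_gt0 zn0.
pose t := e / (2 * N z).
have tz : t * N z = e / 2 by rewrite /t; field; lra.
have t0 : 0 < t by rewrite /t divr_gt0 // mulr_gt0.
have := ball_z ((1 + t) *: z).
rewrite (_ : (1 + t) *: z - z = t *: z); last by rewrite scalerDl scale1r addrAC subrr add0r.
by rewrite !NZ !ger0_norm; lra.
Qed.

Lemma exists_sphere_pair z : z != 0 -> N z < 1 ->
  exists x, N x = 1 /\ N (2 *: z - x) = 1.
Proof.
move=> zn0 z1; have z0 := N_gt0 zn0.
pose a (s : R) : R := 1 - 2 * s.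
pose b (s : R) : R := s * (1 - s).
have ca : continuous a.
  by move=> s; apply: cvgB; [exact: cvg_cst | apply: cvgM; [exact: cvg_cst | exact: cvg_id]].
have cb : continuous b.
  by move=> s; apply: cvgM; [exact: cvg_id | apply: cvgB; [exact: cvg_cst | exact: cvg_id]].
(* w runs from z to -z avoiding 0, so w / N w runs on the sphere from z / N z to -z / N z. *)
pose w s := a s *: z + b s *: perp z.
have w_neq0 s : w s != 0.
  by apply/eqP => /(perp_free zn0) []; rewrite /a /b; nra.
pose n s := N (w s).
have n_gt0 s : 0 < n s by apply: N_gt0.
have cn : continuous n by apply: continuous_N_comb.
pose h s := N ((2 - a s / n s) *: z + (- (b s / n s)) *: perp z).
have hE s : h s = N (2 *: z - (n s)^-1 *: w s).
  by congr N; row2_field; rewrite gt_eqF.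
have ch : continuous h.
  apply: continuous_N_comb => s.
    apply: cvgB; first exact: cvg_cst.
    by apply: cvgM; [exact: ca | apply: cvgV; [rewrite gt_eqF | exact: cn]].
  by apply: cvgN; apply: cvgM; [exact: cb | apply: cvgV; [rewrite gt_eqF | exact: cn]].
have w0 : w 0 = z by rewrite /w /a /b; row2_field.
have w1 : w 1 = - z by rewrite /w /a /b; row2_field.
have h0 : h 0 < 1.
  rewrite hE /n w0 (_ : 2 *: z - _ = (2 - (N z)^-1) *: z); last by row2_field; rewrite gt_eqF.
  rewrite NZ -{2}(ger0_norm (ltW z0)) -normrM (_ : _ * N z = 2 * N z - 1);
    last by field; rewrite gt_eqF.
  by rewrite ltr_norml; lra.
have h1 : 1 < h 1.
  rewrite hE /n w1 NN (_ : 2 *: z - _ = (2 + (N z)^-1) *: z); last by row2_field; rewrite gt_eqF.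
  rewrite NZ ger0_norm; last by rewrite addr_ge0 // invr_ge0 ltW.
  by rewrite (_ : _ * N z = 2 * N z + 1); [lra | field; rewrite gt_eqF].
have [c _ hc] : exists2 c, c \in `[0, 1] & h c = 1.
  apply: IVT; [exact: ler01 | exact: continuous_subspaceT |].
  by rewrite ge_min le_max (ltW h0) (ltW h1) orbT.
exists ((n c)^-1 *: w c); split; last by rewrite -hE.
by rewrite NZ ger0_norm ?invr_ge0 ?ltW // mulVf // gt_eqF.
Qed.

End Norm.

Section StrictlyConvex.
Variables (R : realType) (N : 'rV[R]_2 -> R).
Hypotheses (normN : is_norm N) (strictN : strictly_convex N).
Implicit Types (p q r d x y : 'rV[R]_2) (m k t : R).

Lemma open_segment_N_lt1 m q r : N q = 1 -> N r = 1 -> q != r -> 0 < m < 1 ->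
  N ((1 - m) *: q + m *: r) < 1.
Proof.
move=> q1 r1 qr /andP[m0 m1]; rewrite ltNge; apply/negP => hm.
apply: (strictN q1 r1 qr) => t /andP[t0 t1]; apply/le_anti.
rewrite N_comb_le1 ?q1 ?r1 ?subr_ge0 ?subrK //=.
set qt := (1 - t) *: q + t *: r; set qm := (1 - m) *: q + m *: r in hm *.
have [tm|mt] := lerP t m.
- apply: (@N_comb_ge1 _ _ _ ((1 - m) / (1 - t)) ((m - t) / (1 - t)) _ r); rewrite ?r1 //.
  + by rewrite divr_gt0 //; lra.
  + by rewrite divr_ge0 //; lra.
  + by field; lra.
  + by rewrite (_ : _ *: qt + _ *: r = qm) // /qt /qm; row2_field.
- apply: (@N_comb_ge1 _ _ _ (m / t) ((t - m) / t) _ q); rewrite ?q1 //.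
  + by rewrite divr_gt0 //; lra.
  + by rewrite divr_ge0 //; lra.
  + by field; lra.
  + by rewrite (_ : _ *: qt + _ *: q = qm) // /qt /qm; row2_field.
Qed.

Lemma sphere_chord_cross_inj p q d : d != 0 ->
  sphere_chord N p d -> sphere_chord N q d -> cross p d = cross q d -> p = q.
Proof.
move=> dn0 [p1 pd1] [q1 qd1] pq.
have [k qpE] : exists k, q - p = k *: d.
  by apply: cross_eq0_colinear => //; move: pq; rewrite /cross !mxE; lra.
have qE : q = p + k *: d by rewrite -qpE addrC subrK.
suff k0 : k = 0 by rewrite qE k0 scale0r addr0.
have dist_l u c : c != 0 -> u + c *: d != u.
  by move=> cn0; rewrite -subr_eq0 addrC addKr scaler_eq0 negb_or cn0.
have [kn|kp|//] := ltgtP k 0; exfalso.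
- have : N q < 1.
    rewrite (_ : q = (1 - (1 - k)^-1) *: (q - d) + (1 - k)^-1 *: p);
      last by rewrite qE; row2_field.
    apply: open_segment_N_lt1; rewrite ?qd1 //.
      by rewrite qE (_ : _ - d = p + (k - 1) *: d) ?dist_l //; [apply/eqP; lra | row2_field].
    by rewrite invr_gt0 invf_lt1; lra.
  by rewrite q1 ltxx.
- have : N p < 1.
    rewrite (_ : p = (1 - (1 + k)^-1) *: (p - d) + (1 + k)^-1 *: q);
      last by rewrite qE; row2_field.
    apply: open_segment_N_lt1; rewrite ?pd1 //.
      rewrite eq_sym qE (_ : p + _ = (p - d) + (1 + k) *: d) ?dist_l //.
        by apply/eqP; lra.
      by row2_field.
    by rewrite invr_gt0 invf_lt1; lra.
  by rewrite p1 ltxx.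
Qed.

Lemma sphere_chords_cross_between p1 p2 p3 d : d != 0 ->
  sphere_chord N p1 d -> sphere_chord N p2 d -> sphere_chord N p3 d ->
  cross p1 d < cross p2 d -> cross p2 d < cross p3 d -> False.
Proof.
move=> dn0 [p1_1 p1d_1] [p2_1 p2d_1] [p3_1 p3d_1] l12 l23.
pose m := (cross p2 d - cross p1 d) / (cross p3 d - cross p1 d).
have m01 : 0 < m < 1.
  by rewrite divr_gt0 ?ltr_pdivrMr /=; lra.
have p13 : p1 != p3 by apply: contraTneq l12 => ->; rewrite -leNgt ltW.
pose q := (1 - m) *: p1 + m *: p3.
have q_lt1 : N q < 1 by apply: open_segment_N_lt1.
have qd_lt1 : N (q - d) < 1.
  rewrite (_ : q - d = (1 - m) *: (p1 - d) + m *: (p3 - d)); last by rewrite /q; row2_field.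
  by apply: open_segment_N_lt1 => //; rewrite (can_eq (subrK d)).
have [k q_p2] : exists k, q - p2 = k *: d.
  apply: cross_eq0_colinear => //.
  by move: l12 l23; rewrite /q /m /cross !mxE => ? ?; field; lra.
have p2q : p2 + k *: d = q by rewrite -q_p2 addrC subrK.
by apply: (sphere_chord_translate_lt1 normN (k := k) (conj p2_1 p2d_1)); rewrite p2q.
Qed.

Lemma sphere_chords_two_lines p1 p2 p3 d : d != 0 ->
  sphere_chord N p1 d -> sphere_chord N p2 d -> sphere_chord N p3 d ->
  cross p1 d != cross p2 d -> cross p2 d != cross p3 d -> cross p1 d != cross p3 d ->
  False.
Proof.
move=> dn0 c1 c2 c3.
have between := sphere_chords_cross_between dn0.
case: (ltgtP (cross p1 d) (cross p2 d)) => // h12 _;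
case: (ltgtP (cross p2 d) (cross p3 d)) => // h23 _;
case: (ltgtP (cross p1 d) (cross p3 d)) => // h13 _;
  first [ exact: (between p1 p2 p3) | exact: (between p1 p3 p2)
        | exact: (between p3 p1 p2) | exact: (between p2 p1 p3)
        | exact: (between p2 p3 p1) | exact: (between p3 p2 p1) | lra ].
Qed.

Lemma sphere_pair_unique x x' y y' : N x = 1 -> N x' = 1 -> N y = 1 -> N y' = 1 ->
  x + x' = y + y' -> x + x' != 0 -> (y = x /\ y' = x') \/ (y = x' /\ y' = x).
Proof.
move=> x1 x'1 y1 y'1 sum_eq sum_neq0.
have x'E : x' = y + y' - x by rewrite -sum_eq addrC addKr.
have [yx|xy] := eqVneq x y.
  by subst y; left; split=> //; apply: (addrI x); rewrite sum_eq.
pose d := x - y.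
have dn0 : d != 0 by rewrite subr_eq0.
have chord_x : sphere_chord N x d by split; rewrite // (_ : x - d = y) //; row2_field.
have chord_y' : sphere_chord N y' d by split; rewrite // (_ : y' - d = x') // x'E; row2_field.
have chord_x' : sphere_chord N (- x') d.
  by split; rewrite ?NN // (_ : - x' - d = - y') ?NN // x'E; row2_field.
have chord_y : sphere_chord N (- y) d.
  by split; rewrite ?NN // (_ : - y - d = - x) ?NN //; row2_field.
have cross_x' : cross (- x') d = - cross y' d by rewrite /cross /d x'E !mxE; ring.
have cross_y : cross (- y) d = - cross x d by rewrite /cross /d !mxE; ring.
have [xy'|ne_xy'] := eqVneq (cross x d) (cross y' d).
  move: (sphere_chord_cross_inj dn0 chord_x chord_y' xy') => y'E; subst y'.
  by right; split=> //; apply: (addIr x); rewrite [x' + x]addrC sum_eq.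
have [xx'|ne_xx'] := eqVneq (cross x d) (cross (- x') d).
  have x_eq := sphere_chord_cross_inj dn0 chord_x chord_x' xx'.
  by move: sum_neq0; rewrite x_eq addNr eqxx.
exfalso; rewrite cross_x' in ne_xx'.
have [/eqP y'0|y'0] := eqVneq (cross y' d) 0.
  apply: (sphere_chords_two_lines dn0 chord_x chord_y' chord_y) => //; rewrite cross_y;
    by apply: contra_neq ne_xy' => h; lra.
apply: (sphere_chords_two_lines dn0 chord_x chord_y' chord_x') => //; rewrite cross_x' //.
by apply: contra_neq y'0 => h; lra.
Qed.

End StrictlyConvex.

Theorem lemma2p8 (R : realType) (N : 'rV[R]_2 -> R) :
  is_norm N -> strictly_convex N ->
  forall z : 'rV[R]_2, in_int_ball N z -> z != 0 ->
  exists x : 'rV[R]_2, exists x' : 'rV[R]_2,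
    [/\ N x = 1, N x' = 1, z = 2^-1 *: (x + x') &
        forall y y' : 'rV[R]_2, N y = 1 -> N y' = 1 -> z = 2^-1 *: (y + y') ->
          (y = x /\ y' = x') \/ (y = x' /\ y' = x)].
Proof.
move=> normN strictN z z_int zn0.
have [x [x1 x'1]] := exists_sphere_pair normN zn0 (in_int_ball_N_lt1 normN z_int).
exists x, (2 *: z - x); split=> //.
  by rewrite addrC subrK scalerA mulVf ?scale1r // pnatr_eq0.
move=> y y' y1 y'1 zE; apply: (sphere_pair_unique normN strictN) => //.
  by rewrite addrC subrK zE scalerA divff ?scale1r // pnatr_eq0.
by rewrite addrC subrK scaler_eq0 negb_or zn0 pnatr_eq0.
Qed.
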